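(* Let $K$ be an $n\times d$ real matrix with rows $K_1,\dots,K_n$, let $0<\delta_2\le\delta_1\le1/4$, and let $S\subseteq[n]$ satisfy (i) for all $j,\ell\in S$ with $j\ne\ell$: $|K_jK_\ell^T|\le\delta_1\min(\|K_j\|_2^2,\|K_\ell\|_2^2)$; (ii) for all $j\in S$, $\ell\notin S$: $|K_\ell K_j^T|\le\delta_2\min(\|K_j\|_2^2,\|K_\ell\|_2^2)$. Assume $K_i\neq0$ for all $i\in S$. Let $\rho=\frac{1}{1+\delta_1^2|S|+\delta_2^2n}$ and $U=\{i\in[n]:\tau_i(K)\ge\rho\}$. Then $S\subseteq U$ and $|U|\le d\,(1+\delta_1^2|S|+\delta_2^2n)$.
   Context: The leverage score of row $i$ of $K$ is $\tau_i(K)=\sup_{y\in\mathbb{R}^d:\,Ky\ne0}\frac{\langle K_i,y\rangle^2}{\sum_{j=1}^n\langle K_j,y\rangle^2}$, equivalently $K_i(K^TK)^{+}K_i^T$ with $^{+}$ the Moore–Penrose pseudoinverse. $[n]=\{1,\dots,n\}$. *)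

From HB Require Import structures.
From mathcomp Require Import all_boot all_order all_algebra.
From mathcomp Require Import boolp classical_sets reals.
Set Implicit Arguments. Unset Strict Implicit. Unset Printing Implicit Defensive.
Import Order.TTheory GRing.Theory Num.Theory.
Local Open Scope ring_scope.
Local Open Scope classical_set_scope.

Definition rdot (R : realType) (d : nat) (u v : 'rV[R]_d) : R :=
  \sum_(k < d) u 0 k * v 0 k.

(* Leverage score of row i of K, via the sup definition:
   tau_i(K) = sup_{y : K y <> 0} <K_i,y>^2 / sum_j <K_j,y>^2.
   (mathcomp's sup of the empty set is 0, matching the pseudoinverse
   formula K_i (K^T K)^+ K_i^T = 0 when K = 0.) *)
Definition leverage (R : realType) (n d : nat) (K : 'M[R]_(n, d)) (i : 'I_n) : R :=
  sup [set r : R | exists y : 'cV[R]_d, K *m y != 0 /\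
         r = ((K *m y) i 0) ^+ 2 / \sum_(j < n) ((K *m y) j 0) ^+ 2].

From HB Require Import structures.
From mathcomp Require Import all_boot all_order all_algebra.
From mathcomp Require Import boolp classical_sets reals.
From mathcomp Require Import ring.
Import Order.TTheory GRing.Theory Num.Theory.
Local Open Scope ring_scope.

(* Let P be the orthogonal projector onto the column space of K.  Since
   K y = P (K y), Cauchy-Schwarz gives tau_i(K) <= sum_k P_ik^2 = P_ii, so the
   leverage scores sum to at most tr P = rank K <= d; hence at most d / rho of
   them reach rho.  For i in S, testing the supremum at y = K_i^T gives
   tau_i(K) >= |K_i|^4 / sum_j <K_j, K_i>^2, and the incoherence hypotheses
   bound each <K_j, K_i>^2 by |K_i|^4 times 1, delta1^2 or delta2^2. *)

Lemma psumr_sqr_eq0 {R : realDomainType} {I : finType} {f : I -> R} :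
  \sum_i f i ^+ 2 = 0 -> forall i, f i = 0.
Proof.
move=> /psumr_eq0P f0 i; apply/eqP; rewrite -sqrf_eq0.
by rewrite f0 // => j _; exact: sqr_ge0.
Qed.

Lemma psumr_sqr_gt0 {R : realDomainType} {I : finType} (f : I -> R) i :
  f i != 0 -> 0 < \sum_j f j ^+ 2.
Proof.
move=> fi0; rewrite lt_def sumr_ge0 ?andbT => [|j _]; last exact: sqr_ge0.
by apply: contra fi0 => /eqP/psumr_sqr_eq0->.
Qed.

Lemma sqr_sum_le {R : realDomainType} {I : finType} (f g : I -> R) :
  (\sum_i f i * g i) ^+ 2 <= (\sum_i f i ^+ 2) * (\sum_i g i ^+ 2).
Proof.
set a := \sum_i f i ^+ 2; set b := \sum_i f i * g i; set c := \sum_i g i ^+ 2.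
have [a0|a_neq0] := eqVneq a 0.
  rewrite /b big1 ?expr0n ?a0 ?mul0r // => i _.
  by rewrite (psumr_sqr_eq0 a0) mul0r.
have a_gt0 : 0 < a by rewrite lt_def a_neq0 sumr_ge0 // => i _; exact: sqr_ge0.
have : 0 <= a * (a * c - b ^+ 2).
  have -> : a * (a * c - b ^+ 2) = \sum_i (b * f i - a * g i) ^+ 2.
    transitivity (\sum_i (b ^+ 2 * f i ^+ 2 - 2 * a * b * (f i * g i)
                          + a ^+ 2 * g i ^+ 2)).
      rewrite !big_split /= sumrN -!mulr_sumr -/a -/b -/c; ring.
    by apply: eq_bigr => i _; ring.
  by apply: sumr_ge0 => i _; exact: sqr_ge0.
by rewrite pmulr_rge0 // subr_ge0.
Qed.

Lemma rdotE {R : realType} {d} (u v : 'rV[R]_d) : rdot u v = (u *m v^T) 0 0.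
Proof. by rewrite mxE; apply: eq_bigr => k _; rewrite mxE. Qed.

Lemma rdot_gt0 {R : realType} {d} {u : 'rV[R]_d} : u != 0 -> 0 < rdot u u.
Proof.
case/rV0Pn=> k uk0.
rewrite /rdot (eq_bigr (fun j => u 0 j ^+ 2)) => [|j _]; last by rewrite expr2.
exact: psumr_sqr_gt0 _ _ uk0.
Qed.

Lemma gram_unitmx {R : realType} {m d} (A : 'M[R]_(m, d)) :
  row_free A -> A *m A^T \in unitmx.
Proof.
move=> freeA; rewrite -row_free_unit; apply: inj_row_free => v vAAT0.
apply/eqP; rewrite -(mulmx_free_eq0 _ freeA); apply: contraT => vA0.
have := rdot_gt0 vA0; rewrite rdotE trmx_mul mulmxA -(mulmxA v) vAAT0.
by rewrite mul0mx mxE ltxx.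
Qed.

Section OrthogonalProjector.
Context {R : realType} {n r : nat} (C : 'M[R]_(n, r)).
Hypothesis freeCT : row_free C^T.

Definition orthoproj : 'M[R]_n := C *m invmx (C^T *m C) *m C^T.

Local Notation P := orthoproj.

Lemma gram_unitmx_tr : C^T *m C \in unitmx.
Proof. by rewrite -{2}[C]trmxK gram_unitmx. Qed.

Lemma orthoprojK : P *m C = C.
Proof. by rewrite -!mulmxA mulVmx ?mulmx1 // gram_unitmx_tr. Qed.

Lemma trmx_orthoproj : P^T = P.
Proof. by rewrite !trmx_mul trmxK trmx_inv trmx_mul trmxK mulmxA. Qed.

Lemma orthoproj_idem : P *m P = P.
Proof. by rewrite {1}/P !mulmxA orthoprojK. Qed.

Lemma mxtrace_orthoproj : \tr P = r%:R.
Proof. by rewrite mxtrace_mulC mulmxA mulmxV ?mxtrace1 // gram_unitmx_tr. Qed.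

Lemma orthoproj_diag i : P i i = \sum_k P i k ^+ 2.
Proof.
rewrite -{1}orthoproj_idem -{2}trmx_orthoproj mxE.
by apply: eq_bigr => k _; rewrite [X in _ * X]mxE expr2.
Qed.

End OrthogonalProjector.

Section ColumnSpaceProjector.
Context {R : realType} {n d : nat} (K : 'M[R]_(n, d)).

Lemma row_free_tr_col_base : row_free (col_base K)^T.
Proof. by rewrite /row_free mxrank_tr; exact: col_base_full. Qed.

Definition colspace_proj : 'M[R]_n := orthoproj (col_base K).

Lemma colspace_projK : colspace_proj *m K = K.
Proof.
rewrite -[in LHS](mulmx_base K) mulmxA orthoprojK ?mulmx_base //.
exact: row_free_tr_col_base.
Qed.

Lemma mxtrace_colspace_proj : \tr colspace_proj = (\rank K)%:R.
Proof. exact/mxtrace_orthoproj/row_free_tr_col_base. Qed.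

Lemma colspace_proj_diag i :
  colspace_proj i i = \sum_k colspace_proj i k ^+ 2.
Proof. exact/orthoproj_diag/row_free_tr_col_base. Qed.

End ColumnSpaceProjector.

Section LeverageScores.
Context {R : realType} {n d : nat} (K : 'M[R]_(n, d)).
Local Open Scope classical_set_scope.

Local Notation ratio i y :=
  (((K *m y) i 0) ^+ 2 / \sum_j ((K *m y) j 0) ^+ 2).

Lemma sqr_mulmx_le_colspace_proj i (y : 'cV[R]_d) :
  ((K *m y) i 0) ^+ 2 <= colspace_proj K i i * \sum_j ((K *m y) j 0) ^+ 2.
Proof.
rewrite -{1}(colspace_projK K) -mulmxA mxE colspace_proj_diag.
exact: sqr_sum_le.
Qed.

Lemma ratio_le_colspace_proj i (y : 'cV[R]_d) : K *m y != 0 ->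
  ratio i y <= colspace_proj K i i.
Proof.
case/cV0Pn=> j Kyj0.
rewrite ler_pdivrMr ?sqr_mulmx_le_colspace_proj //.
exact: (psumr_sqr_gt0 (fun k => (K *m y) k 0) j).
Qed.

Lemma leverage_le_colspace_proj i : leverage K i <= colspace_proj K i i.
Proof.
rewrite /leverage; set A := [set _ | _].
have [[r Ar]|A0] := pselect (A !=set0).
  by apply: ge_sup; [exists r | move=> _ [y [Ky0 ->]]; exact: ratio_le_colspace_proj].
rewrite (_ : A = set0) ?sup0; last by apply/seteqP; split=> // r Ar; apply: A0; exists r.
by rewrite colspace_proj_diag sumr_ge0 // => k _; exact: sqr_ge0.
Qed.

Lemma ratio_le_leverage i (y : 'cV[R]_d) :
  K *m y != 0 -> ratio i y <= leverage K i.
Proof.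
move=> Ky0; apply: sup_upper_bound; last by exists y.
split; first by exists (ratio i y), y.
by exists (colspace_proj K i i) => _ [z [Kz0 ->]]; exact: ratio_le_colspace_proj.
Qed.

Lemma leverage_ge0 i : 0 <= leverage K i.
Proof.
rewrite /leverage; set A := [set _ | _].
have [[_ [y [Ky0 _]]]|A0] := pselect (A !=set0).
  apply: le_trans (ratio_le_leverage i y Ky0).
  by rewrite divr_ge0 ?sqr_ge0 ?sumr_ge0 // => j _; exact: sqr_ge0.
by rewrite (_ : A = set0) ?sup0 //; apply/seteqP; split=> // r Ar; apply: A0; exists r.
Qed.

Lemma sum_leverage_le_rank : \sum_i leverage K i <= (\rank K)%:R.
Proof.
rewrite -mxtrace_colspace_proj; apply: ler_sum => i _.
exact: leverage_le_colspace_proj.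
Qed.

Lemma leverage_row_ge i : row i K != 0 ->
  rdot (row i K) (row i K) ^+ 2 / \sum_j rdot (row j K) (row i K) ^+ 2
    <= leverage K i.
Proof.
move=> Ki0; set y := (row i K)^T.
have Ky j : (K *m y) j 0 = rdot (row j K) (row i K).
  by rewrite mxE; apply: eq_bigr => k _; rewrite !mxE.
have Ky0 : K *m y != 0.
  by apply/cV0Pn; exists i; rewrite Ky lt0r_neq0 ?rdot_gt0.
have := ratio_le_leverage i y Ky0.
by rewrite Ky (eq_bigr (fun j => rdot (row j K) (row i K) ^+ 2)) // => j _; rewrite Ky.
Qed.

End LeverageScores.

Lemma card_ge_mul_le_sum {R : realDomainType} {I : finType} (f : I -> R) r :
  (forall i, 0 <= f i) -> #|[set i | r <= f i]|%:R * r <= \sum_i f i.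
Proof.
move=> f_ge0; rewrite mulr_natl -sumr_const.
rewrite [X in _ <= X](bigID (mem [set i | r <= f i])) /=.
rewrite -[X in X <= _]addr0; apply: lerD; first by apply: ler_sum => i; rewrite inE.
exact: sumr_ge0.
Qed.

Lemma sum_sqr_le_incoherent {R : realDomainType} {I : finType} (f : I -> R)
    (S : {set I}) i a delta1 delta2 :
  `|f i| <= a ->
  (forall j, j \in S -> j != i -> `|f j| <= delta1 * a) ->
  (forall j, j \notin S -> j != i -> `|f j| <= delta2 * a) ->
  \sum_j f j ^+ 2 <= a ^+ 2 * (1 + delta1 ^+ 2 * #|S|%:R + delta2 ^+ 2 * #|I|%:R).
Proof.
move=> fi_le fS_le fSC_le.
have sqr_le (x b : R) : `|x| <= b -> x ^+ 2 <= b ^+ 2.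
  by move=> xb; rewrite -(real_normK (num_real x)) !expr2 ler_pM.
pose w j : R := (if j == i then 1 else 0) + delta1 ^+ 2 * (if j \in S then 1 else 0)
                + delta2 ^+ 2.
have sum_w : \sum_j w j = 1 + delta1 ^+ 2 * #|S|%:R + delta2 ^+ 2 * #|I|%:R.
  rewrite /w !big_split /= -big_mkcond big_pred1_eq -mulr_sumr -big_mkcond /=.
  by rewrite !sumr_const !mulr_natr; congr (_ + _ *+ _); apply: eq_card.
rewrite -sum_w mulr_sumr; apply: ler_sum => j _; rewrite /w.
have [->|ji] := eqVneq j i.
  apply: le_trans (sqr_le _ _ fi_le) _.
  rewrite -[X in X <= _]mulr1 ler_wpM2l ?sqr_ge0 // -addrA lerDl addr_ge0 ?sqr_ge0 //.
  by case: ifP; rewrite ?mulr1 ?mulr0 ?sqr_ge0.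
case: ifPn => jS; rewrite add0r.
  apply: le_trans (sqr_le _ _ (fS_le j jS ji)) _.
  by rewrite mulr1 exprMn mulrC ler_wpM2l ?sqr_ge0 // lerDl sqr_ge0.
by rewrite mulr0 add0r (le_trans (sqr_le _ _ (fSC_le j jS ji))) // exprMn mulrC.
Qed.

Lemma one_add_sqrM_nat_gt0 {R : realDomainType} (a b : R) p q :
  0 < 1 + a ^+ 2 * p%:R + b ^+ 2 * q%:R.
Proof. by rewrite -addrA ltr_wpDr // addr_ge0 // mulr_ge0 ?sqr_ge0. Qed.

Lemma leverage_ge_incoherent {R : realType} {n d : nat} (K : 'M[R]_(n, d))
    (S : {set 'I_n}) i delta1 delta2 :
  row i K != 0 ->
  (forall j, j \in S -> j != i ->
     `|rdot (row j K) (row i K)| <= delta1 * rdot (row i K) (row i K)) ->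
  (forall j, j \notin S -> j != i ->
     `|rdot (row j K) (row i K)| <= delta2 * rdot (row i K) (row i K)) ->
  1 / (1 + delta1 ^+ 2 * #|S|%:R + delta2 ^+ 2 * n%:R) <= leverage K i.
Proof.
move=> Ki0 incohS incohSC; apply: le_trans (leverage_row_ge K i Ki0).
set a := rdot (row i K) (row i K); have a_gt0 : 0 < a := rdot_gt0 Ki0.
have s_gt0 : 0 < \sum_j rdot (row j K) (row i K) ^+ 2.
  exact: (psumr_sqr_gt0 (fun j => rdot (row j K) (row i K)) i (lt0r_neq0 a_gt0)).
have D_gt0 := one_add_sqrM_nat_gt0 delta1 delta2 #|S| n.
rewrite ler_pdivlMr // mul1r mulrC ler_pdivrMr //.
rewrite -[in delta2 ^+ 2 * n%:R](card_ord n).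
by apply: (sum_sqr_le_incoherent _ _ i) => //; rewrite -/a ger0_norm // ltW.
Qed.

Theorem mainTheorem7 (R : realType) (n d : nat) (K : 'M[R]_(n, d))
  (delta1 delta2 : R) (S : {set 'I_n}) :
  0 < delta2 -> delta2 <= delta1 -> delta1 <= 1 / 4 ->
  (forall j l, j \in S -> l \in S -> j != l ->
     `|rdot (row j K) (row l K)| <=
       delta1 * Num.min (rdot (row j K) (row j K)) (rdot (row l K) (row l K))) ->
  (forall j l, j \in S -> l \notin S ->
     `|rdot (row l K) (row j K)| <=
       delta2 * Num.min (rdot (row j K) (row j K)) (rdot (row l K) (row l K))) ->
  (forall i, i \in S -> row i K != 0) ->
  let rho := 1 / (1 + delta1 ^+ 2 * #|S|%:R + delta2 ^+ 2 * n%:R) in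
  let U := [set i : 'I_n | rho <= leverage K i] in
  S \subset U /\
  #|U|%:R <= d%:R * (1 + delta1 ^+ 2 * #|S|%:R + delta2 ^+ 2 * n%:R).
Proof.
move=> delta2_gt0 delta21 _ incohS incohSC rowS_neq0.
set D := 1 + _ + _ => rho U.
have delta1_gt0 := lt_le_trans delta2_gt0 delta21.
have D_gt0 : 0 < D := one_add_sqrM_nat_gt0 _ _ _ _.
split.
  apply/fintype.subsetP => i iS; rewrite inE.
  apply: (leverage_ge_incoherent K S i delta1 delta2 (rowS_neq0 i iS)) => j jS ji.
  - apply: (le_trans (incohS j i jS iS ji)).
    by rewrite ler_wpM2l ?ge_min ?lexx ?orbT // ltW.
  - apply: (le_trans (incohSC i j iS jS)).
    by rewrite ler_wpM2l ?ge_min ?lexx // ltW.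
have card_U : #|U|%:R * rho <= (\rank K)%:R.
  exact: le_trans (card_ge_mul_le_sum _ rho (leverage_ge0 K)) (sum_leverage_le_rank K).
rewrite /rho mul1r ler_pdivrMr // in card_U.
by apply: (le_trans card_U); rewrite ler_pM2r // ler_nat rank_leq_col.
Qed.
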